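(* For any real continuous function $f\in C(\Omega)$, $$\|[\mathcal D,\pi(M_f)]\|=\Big|\sqrt{L|Kf-f|^2}\Big|_\infty=\sup_{x\in\Omega}\sqrt{\frac{|f(x)-f(0x)|^2}{2}+\frac{|f(x)-f(1x)|^2}{2}}.$$
   Context: $\Omega=\{0,1\}^{\mathbb N}$ with the shift $\sigma$; for $a\in\{0,1\}$, $ax=(a,x_1,x_2,\dots)$. $\mu$ is the measure of maximal entropy (uniform Bernoulli product measure), $L^2(\mu)$ the Hilbert space of square-integrable functions. $|\cdot|_\infty$ is the supremum norm. Ruelle operator $L\phi(x)=\frac12(\phi(0x)+\phi(1x))$; Koopman operator $K\phi=\phi\circ\sigma$. For $f\in C(\Omega)$, $M_f$ is multiplication $g\mapsto fg$ on $L^2(\mu)$. On $\mathcal H=L^2(\mu)\times L^2(\mu)$ (norm $|(\phi_1,\phi_2)|^2=|\phi_1|^2+|\phi_2|^2$), $\mathcal D=\begin{pmatrix}0&K\\ L&0\end{pmatrix}$ and $\pi(A)=\begin{pmatrix}A&0\\0&A\end{pmatrix}$; $[\mathcal D,\pi(A)]=\mathcal D\pi(A)-\pi(A)\mathcal D$. $\|\cdot\|$ is the operator norm. *)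

From HB Require Import structures.
From mathcomp Require Import all_boot all_order all_algebra.
From mathcomp Require Import all_classical all_reals.
From mathcomp Require Import topology normedtype cantor measure lebesgue_measure lebesgue_integral.
Set Implicit Arguments. Unset Strict Implicit. Unset Printing Implicit Defensive.
Import Order.TTheory GRing.Theory Num.Theory.
Import numFieldNormedType.Exports.
Local Open Scope classical_set_scope.
Local Open Scope ring_scope.

(* Omega = {0,1}^N (false = 0, true = 1), product topology (cantor_space),
   equipped with its Borel sigma-algebra (generated by the open sets). *)
Definition Omega : Type := g_sigma_algebraType (@open cantor_space).

Definition ocons (a : bool) (x : Omega) : Omega :=
  fun n => if n is k.+1 then x k else a.
Definition oshift (x : Omega) : Omega := fun n => x n.+1.

Definition cylinder (n : nat) (w : nat -> bool) : set Omega :=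
  [set x | forall i, (i < n)%N -> x i = w i].

Definition is_uniform_bernoulli {R : realType} (mu : {measure set Omega -> \bar R}) :=
  forall n w, mu (cylinder n w) = ((2 ^- n : R)%:E).

Section Ops.
Context {R : realType}.
Definition ruelle (phi : Omega -> R) : Omega -> R :=
  fun x => (phi (ocons false x) + phi (ocons true x)) / 2.
Definition koopman (phi : Omega -> R) : Omega -> R := fun x => phi (oshift x).
Definition mult (f : Omega -> R) (g : Omega -> R) : Omega -> R := fun x => f x * g x.

Definition pairH := ((Omega -> R) * (Omega -> R))%type.
Definition Dop (p : pairH) : pairH := (koopman p.2, ruelle p.1).
Definition piop (A : (Omega -> R) -> Omega -> R) (p : pairH) : pairH :=
  (A p.1, A p.2).
Definition commutator (T S : pairH -> pairH) (p : pairH) : pairH :=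
  ((T (S p)).1 - (S (T p)).1, (T (S p)).2 - (S (T p)).2).

Variable mu : {measure set Omega -> \bar R}.
Definition inL2 (phi : Omega -> R) :=
  measurable_fun [set: Omega] phi /\ (\int[mu]_x ((phi x ^+ 2)%:E) < +oo)%E.
Definition L2sq (phi : Omega -> R) : R := fine (\int[mu]_x ((phi x ^+ 2)%:E)).
Definition Hnorm (p : pairH) : R := Num.sqrt (L2sq p.1 + L2sq p.2).
Definition opnorm (T : pairH -> pairH) : R :=
  sup [set Hnorm (T p) | p in [set p : pairH | inL2 p.1 /\ inL2 p.2 /\ Hnorm p <= 1]].
End Ops.

Definition supnorm {R : realType} (g : Omega -> R) : R := sup (range (fun x => `|g x|)).

From HB Require Import structures.
From mathcomp Require Import all_boot all_order all_algebra.
From mathcomp Require Import all_classical all_reals.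
From mathcomp Require Import topology normedtype cantor measure lebesgue_measure lebesgue_integral.
From mathcomp Require Import interval_inference measurable_realfun realfun numfun ring lra.
Import Order.TTheory GRing.Theory Num.Theory.
Import numFieldNormedType.Exports.
Local Open Scope classical_set_scope.
Local Open Scope ring_scope.

(* Write C for [D, pi(M_f)] and H for L|Kf - f|^2.  The first component of
   C(phi1, phi2) is (Kf - f) K phi2; since L(g K h) = (L g) h and the uniform
   Bernoulli measure is L-invariant, its squared L^2 norm is the integral of
   H phi2^2.  The second component is L((f - Kf) phi1), whose square is at most
   H L(phi1^2) by Cauchy-Schwarz for the average L; integrating once more gives
   |C| <= |sqrt H|_oo.  Conversely, as H is continuous, testing C on
   (0, 2^(n/2) 1_Z) for a small cylinder Z around a point x gives |C|^2 >= H(x) - e. *)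

Lemma sqrtr_le (R : rcfType) (a b : R) : 0 <= b -> (Num.sqrt a <= b) = (a <= b ^+ 2).
Proof. by move=> b_ge0; rewrite -[b in LHS]ger0_norm // -sqrtr_sqr ler_sqrt ?sqr_ge0. Qed.

Section ScaledIntegrals.
Context d (T : measurableType d) (R : realType) (mu : {measure set T -> \bar R}).
Variables (u v : T -> R) (c : R).
Hypotheses (mfu : measurable_fun setT u) (mfv : measurable_fun setT v).
Hypotheses (u_ge0 : forall x, 0 <= u x) (v_ge0 : forall x, 0 <= v x) (c_ge0 : 0 <= c).

Lemma integral_le_scale : (forall x, u x <= c * v x) ->
  (\int[mu]_x (u x)%:E <= c%:E * \int[mu]_x (v x)%:E)%E.
Proof.
move=> uv; rewrite -ge0_integralZl_EFin //; last first.
- exact/measurable_EFinP.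
- by move=> x _; rewrite lee_fin.
apply: ge0_le_integral => //.
- by move=> x _; rewrite lee_fin.
- exact/measurable_EFinP.
- by apply/measurable_EFinP; exact: measurable_funM.
- by move=> x _; rewrite lee_fin.
Qed.

Lemma scale_le_integral : (forall x, c * v x <= u x) ->
  (c%:E * \int[mu]_x (v x)%:E <= \int[mu]_x (u x)%:E)%E.
Proof.
move=> vu; rewrite -ge0_integralZl_EFin //; last first.
- exact/measurable_EFinP.
- by move=> x _; rewrite lee_fin.
apply: ge0_le_integral => //.
- by move=> x _; rewrite lee_fin mulr_ge0.
- by apply/measurable_EFinP; exact: measurable_funM.
- exact/measurable_EFinP.
- by move=> x _; rewrite lee_fin.
Qed.

End ScaledIntegrals.

Lemma cylinder0 w : cylinder 0 w = setT.
Proof. by apply/seteqP; split => // y _ i. Qed.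

Lemma cylinder_nbhs (x : cantor_space) n : nbhs x (cylinder n x).
Proof.
elim: n => [|n IH]; first by rewrite cylinder0; exact: filterT.
have xn : nbhs x (proj n @^-1` [set x n]).
  apply: open_nbhs_nbhs; split => //.
  by apply: open_comp => [+ _|]; [exact: proj_continuous | exact: discrete_open].
apply: filterS (filterI IH xn) => y [yx yxn] i.
by rewrite ltnS leq_eqVlt => /predU1P[->|/yx].
Qed.

Lemma nbhs_cylinder (x : cantor_space) U : nbhs x U -> exists n, cylinder n x `<=` U.
Proof.
(* The cylinders around [x] generate a filter that converges to [x]. *)
pose F := filter_from [set: nat] (fun n => cylinder n x).
have FF : Filter F.
  apply: filter_from_filter => [|i j _ _]; first by exists 0%N.
  exists (maxn i j) => // y xy; split => k k_lt; apply: xy;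
  by rewrite leq_max k_lt ?orbT.
have Fx : F --> x.
  apply/cvg_sup => N V [W] [[W'] oW <-] WfN WV.
  by exists N.+1 => // y xy; apply: WV; rewrite /= /proj /= xy.
by move=> /Fx [n _ sub]; exists n.
Qed.

Lemma cylinder_recenter n w x : cylinder n w x -> cylinder n w = cylinder n x.
Proof. by move=> wx; apply/seteqP; split => y yc i i_lt; rewrite yc // wx. Qed.

Lemma open_cylinder n w : @open cantor_space (cylinder n w).
Proof. by rewrite openE => x /cylinder_recenter ->; exact: cylinder_nbhs. Qed.

Lemma measurable_cylinder n w : measurable (cylinder n w : set Omega).
Proof. by apply: sub_sigma_algebra; exact: open_cylinder. Qed.

(* [set0] is included so that the family is closed under intersection. *)
Definition cylinders : set (set Omega) :=
  [set A | A = set0 \/ exists n w, A = cylinder n w].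

Lemma setI_closed_cylinders : setI_closed cylinders.
Proof.
move=> A B [->|[n [w ->]]] [->|[m [v ->]]]; try by left; rewrite ?set0I ?setI0.
have [agree|disagree] := pselect (forall i, (i < minn n m)%N -> w i = v i); last first.
  left; apply/seteqP; split => // y [yw yv]; apply: disagree => i.
  by rewrite leq_min => /andP[i_n i_m]; rewrite -yw // -yv.
right; exists (maxn n m), (fun i => if (i < n)%N then w i else v i).
apply/seteqP; split => y.
  move=> [yw yv] i; rewrite leq_max => /orP[] i_lt; first by rewrite i_lt yw.
  by case: ifP => i_n; [rewrite yw | rewrite yv].
move=> yc; split => i i_lt; first by rewrite yc ?i_lt // leq_max i_lt.
rewrite yc ?leq_max ?i_lt ?orbT //.
by case: ifP => // i_n; apply: agree; rewrite leq_min i_n.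
Qed.

(* [pickle] enumerates the cylinders, so an open set is a countable union of
   the cylinders it contains. *)
Lemma open_sigma_cylinders (U : set cantor_space) :
  open U -> <<s cylinders >> (U : set Omega).
Proof.
move=> oU.
pose S (k : nat) : set Omega :=
  if unpickle k is Some (n, s) then
    if pselect (cylinder n (nth false s) `<=` U) then cylinder n (nth false s) else set0
  else set0.
have -> : (U : set Omega) = \bigcup_k S k.
  apply/seteqP; split => [x Ux|x [k _]].
    have [n xU] : exists n, cylinder n x `<=` U.
      by apply: nbhs_cylinder; exact: open_nbhs_nbhs.
    have mkseqE : cylinder n (nth false (mkseq x n)) = cylinder n x.
      by apply/seteqP; split => z zc i i_lt; rewrite zc // nth_mkseq.
    exists (pickle (n, mkseq x n)) => //.
    by rewrite /S pickleK mkseqE; case: pselect.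
  rewrite /S; case: (unpickle k) => [[n s]|] //.
  by case: pselect => // sub; exact: sub.
apply: sigma_algebra_bigcup => k; apply: sub_sigma_algebra.
rewrite /S; case: (unpickle k) => [[n s]|]; last by left.
by case: pselect => sub; [right; exists n, (nth false s) | left].
Qed.

Lemma measurable_cylindersE : @measurable _ Omega = <<s cylinders >>.
Proof.
apply/seteqP; split; apply: smallest_sub; try exact: smallest_sigma_algebra.
  exact: open_sigma_cylinders.
by move=> A [->|[n [w ->]]]; [exact: measurable0 | exact: measurable_cylinder].
Qed.

Lemma ocons_continuous a : continuous (ocons a : cantor_space -> cantor_space).
Proof.
move=> x U /nbhs_cylinder [n xU].
apply: filterS (cylinder_nbhs x n) => y xy; apply: xU => -[|i] i_lt //=.
by apply: xy; exact: ltn_trans (ltnSn i) i_lt.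
Qed.

Lemma oshift_continuous : continuous (oshift : cantor_space -> cantor_space).
Proof.
move=> x U /nbhs_cylinder [n xU].
by apply: filterS (cylinder_nbhs x n.+1) => y xy; apply: xU => i i_lt; exact: xy.
Qed.

Lemma cantor_continuous_measurable (g : cantor_space -> cantor_space) :
  continuous g -> measurable_fun [set: Omega] (g : Omega -> Omega).
Proof.
move=> /continuousP cg; apply: (measurability _ (erefl (@measurable _ Omega))).
by move=> _ [U oU <-]; rewrite setTI; apply: sub_sigma_algebra; exact: cg.
Qed.

Lemma cantor_continuous_measurableR (R : realType) (g : cantor_space -> R) :
  continuous g -> measurable_fun [set: Omega] (g : Omega -> R).
Proof.
move=> /continuousP cg; apply: (measurability _ (RGenOpens.measurableE R)).
move=> _ [_ [a [b ->] <-]]; rewrite setTI.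
by apply: sub_sigma_algebra; apply: cg; exact: interval_open.
Qed.

Lemma measurable_ocons a : measurable_fun [set: Omega] (ocons a).
Proof. exact: cantor_continuous_measurable (ocons_continuous a). Qed.

Lemma measurable_oshift : measurable_fun [set: Omega] oshift.
Proof. exact: cantor_continuous_measurable oshift_continuous. Qed.

Lemma oshift_ocons a x : oshift (ocons a x) = x.
Proof. by []. Qed.

Lemma ocons_preimage_cylinder a n w : ocons a @^-1` cylinder n.+1 w =
  if a == w 0%N then cylinder n (fun i => w i.+1) else set0.
Proof.
have [->|aw] := eqVneq a (w 0%N); apply/seteqP; split => y //=.
- by move=> yw i; exact: (yw i.+1).
- by move=> yw [|i] //; exact: yw.
- by move=> yw; move: aw; rewrite -(yw 0%N) ?eqxx.
Qed.

Section Operators.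
Context {R : realType}.
Implicit Types g h phi : Omega -> R.

Lemma koopman_continuous (g : cantor_space -> R) :
  continuous g -> continuous (koopman g : cantor_space -> R).
Proof. by move=> cg x; exact: continuous_comp (oshift_continuous x) (cg _). Qed.

Lemma ruelle_continuous (g : cantor_space -> R) :
  continuous g -> continuous (ruelle g : cantor_space -> R).
Proof.
move=> cg x.
apply: (@continuousM _ _ ((g \o ocons false) + (g \o ocons true)) (cst 2^-1)).
  by apply: continuousD; exact: continuous_comp (ocons_continuous _ _) (cg _).
exact: cvg_cst.
Qed.

Lemma measurable_koopman phi :
  measurable_fun setT phi -> measurable_fun setT (koopman phi).
Proof. by move=> mphi; apply: measurableT_comp mphi measurable_oshift. Qed.

Lemma measurable_ruelle phi :
  measurable_fun setT phi -> measurable_fun setT (ruelle phi).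
Proof.
move=> mphi; apply: measurable_funM; last exact: measurable_cst.
by apply: measurable_funD; apply: measurableT_comp mphi (measurable_ocons _).
Qed.

Lemma ruelle_ge0 phi x : (forall y, 0 <= phi y) -> 0 <= ruelle phi x.
Proof. by move=> phi0; rewrite /ruelle divr_ge0 ?addr_ge0. Qed.

Lemma ruelle_mul_koopman g h x :
  ruelle (fun y => g y * koopman h y) x = ruelle g x * h x.
Proof. by rewrite /ruelle /koopman !oshift_ocons; ring. Qed.

Lemma ruelle_mul_sqr_le g h x :
  ruelle (fun y => g y * h y) x ^+ 2 <=
  ruelle (fun y => g y ^+ 2) x * ruelle (fun y => h y ^+ 2) x.
Proof.
rewrite /ruelle.
set g0 := g (ocons false x); set g1 := g (ocons true x).
set h0 := h (ocons false x); set h1 := h (ocons true x).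
have := sqr_ge0 (g0 * h1 - g1 * h0); nra.
Qed.

Lemma commutator_fst (f : Omega -> R) (p : @pairH R) :
  (commutator Dop (piop (mult f)) p).1 = (fun x => (koopman f x - f x) * koopman p.2 x).
Proof.
by apply/funext => x; rewrite /commutator /Dop /piop /mult /koopman /= !fctE mulrBl.
Qed.

Lemma commutator_snd (f : Omega -> R) (p : @pairH R) :
  (commutator Dop (piop (mult f)) p).2 = ruelle (fun y => (f y - koopman f y) * p.1 y).
Proof.
apply/funext => x.
by rewrite /commutator /Dop /piop /mult /ruelle /koopman /= !fctE !oshift_ocons; ring.
Qed.

End Operators.

Section UniformBernoulli.
Context {R : realType} {mu : {measure set Omega -> \bar R}}.
Hypothesis hmu : is_uniform_bernoulli mu.

Lemma uniform_bernoulli_setT : mu setT = 1%E.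
Proof. by rewrite -(cylinder0 (fun=> false)) hmu expr0 invr1. Qed.

(* [pushforward mu (ocons a)] as a measure: its instance takes the measurability proof. *)
Let ocons_image a := measure_function_pushforward__canonical__measure_function_Measure
  mu (measurable_ocons a).

Let two : {nonneg R} := 2%:R%:nng.

Lemma uniform_bernoulli_ocons A : measurable A ->
  (2%:E * mu A = mu (ocons false @^-1` A) + mu (ocons true @^-1` A))%E.
Proof.
(* Both sides are finite measures that agree on the pi-system of cylinders. *)
move=> mA; have -> : (2%:E * mu A)%E = mscale two mu A by [].
rewrite -(measure_addE (ocons_image false) (ocons_image true)).
apply: (measure_unique cylinders (fun=> setT) measurable_cylindersE setI_closed_cylinders) => //.
- by move=> _; right; exists 0%N, (fun=> false); rewrite cylinder0.
- by apply/seteqP; split => // y _; exists 0%N.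
- move=> B cB; transitivity (2%:E * mu B)%E; first by [].
  transitivity (ocons_image false B + ocons_image true B)%E; last exact/esym/measure_addE.
  rewrite /= /pushforward; case: cB => [->|[[|n] [w ->]]].
  + by rewrite !preimage_set0 !measure0 mule0 adde0.
  + by rewrite cylinder0 !preimage_setT uniform_bernoulli_setT mule1.
  + rewrite !ocons_preimage_cylinder hmu.
    case: (w 0%N) => /=; rewrite measure0 ?add0e ?adde0 hmu -EFinM; congr (_%:E);
    by rewrite exprS invfM mulrA divff // mul1r.
- by move=> _; rewrite [X in (X < _)%E]/(2%:E * mu setT)%E uniform_bernoulli_setT ltry.
Qed.

Lemma integral_ocons (F : Omega -> \bar R) :
  measurable_fun setT F -> (forall x, 0 <= F x)%E ->
  (2%:E * \int[mu]_x F x = \int[mu]_x F (ocons false x) + \int[mu]_x F (ocons true x))%E.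
Proof.
move=> mF F0.
have -> : (2%:E * \int[mu]_x F x = \int[mscale two mu]_x F x)%E.
  by rewrite ge0_integral_mscale.
transitivity (\int[measure_add (ocons_image false) (ocons_image true)]_x F x)%E.
  apply: eq_measure_integral => A mA _.
  transitivity (ocons_image false A + ocons_image true A)%E; last exact/esym/measure_addE.
  exact: uniform_bernoulli_ocons.
rewrite ge0_integral_measure_add //.
by congr (_ + _)%E; rewrite (ge0_integral_pushforward (measurable_ocons _)).
Qed.

Lemma integral_ruelle (phi : Omega -> R) :
  measurable_fun setT phi -> (forall x, 0 <= phi x) ->
  (\int[mu]_x (ruelle phi x)%:E = \int[mu]_x (phi x)%:E)%E.
Proof.
move=> mphi phi0.
have mphi_ocons a : measurable_fun setT (fun x => phi (ocons a x)).
  exact: measurableT_comp mphi (measurable_ocons a).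
transitivity (2^-1%:E * (\int[mu]_x (phi (ocons false x))%:E
                       + \int[mu]_x (phi (ocons true x))%:E))%E.
  rewrite -ge0_integralD //; last 4 first.
  - by move=> x _; rewrite lee_fin.
  - exact/measurable_EFinP.
  - by move=> x _; rewrite lee_fin.
  - exact/measurable_EFinP.
  rewrite -ge0_integralZl_EFin //; last 2 first.
  - by move=> x _; rewrite lee_fin addr_ge0.
  - by apply/measurable_EFinP; exact: measurable_funD.
  by apply: eq_integral => x _; rewrite /ruelle -EFinD -EFinM mulrC.
rewrite -(integral_ocons (fun x => (phi x)%:E)) //; last exact/measurable_EFinP.
by rewrite muleA -EFinM mulVf // mul1e.
Qed.

Definition cylinder_bump n w : Omega -> R :=
  fun y => Num.sqrt (2 ^+ n) * \1_(cylinder n w) y.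

Lemma measurable_cylinder_bump n w : measurable_fun setT (cylinder_bump n w).
Proof.
apply: measurable_funM; first exact: measurable_cst.
exact: measurable_indic (measurable_cylinder n w).
Qed.

Lemma sqr_cylinder_bump n w y :
  cylinder_bump n w y ^+ 2 = 2 ^+ n * \1_(cylinder n w) y.
Proof.
rewrite /cylinder_bump exprMn sqr_sqrtr ?exprn_ge0 //; congr (_ * _).
by rewrite /indic; case: (_ \in _); rewrite ?expr1n ?expr0n.
Qed.

Lemma integral_sqr_cylinder_bump n w :
  (\int[mu]_y (cylinder_bump n w y ^+ 2)%:E = 1%:E)%E.
Proof.
under eq_integral do rewrite sqr_cylinder_bump EFinM.
rewrite ge0_integralZl_EFin ?exprn_ge0 //; last first.
  by apply/measurable_EFinP; exact: measurable_indic (measurable_cylinder n w).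
rewrite integral_indic //; last exact: measurable_cylinder.
by rewrite setIT hmu -EFinM mulfV.
Qed.

Lemma inL2_cylinder_bump n w : inL2 mu (cylinder_bump n w).
Proof.
by split; [exact: measurable_cylinder_bump | rewrite integral_sqr_cylinder_bump ltry].
Qed.

End UniformBernoulli.

Definition op_bounded {R : realType} (mu : {measure set Omega -> \bar R})
    (A : @pairH R -> @pairH R) (c : R) :=
  forall p : @pairH R, inL2 mu p.1 -> inL2 mu p.2 -> Hnorm mu (A p) <= c * Hnorm mu p.

Section SquareIntegrable.
Context {R : realType} {mu : {measure set Omega -> \bar R}}.
Implicit Types (phi : Omega -> R) (p : @pairH R) (A : @pairH R -> @pairH R).

Lemma integral_sqr_ge0 phi : (0 <= \int[mu]_x (phi x ^+ 2)%:E)%E.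
Proof. by apply: integral_ge0 => x _; rewrite lee_fin sqr_ge0. Qed.

Lemma integral_sqrE phi :
  inL2 mu phi -> (\int[mu]_x (phi x ^+ 2)%:E)%E = (L2sq mu phi)%:E.
Proof. by move=> [_ fin]; rewrite /L2sq fineK // ge0_fin_numE // integral_sqr_ge0. Qed.

Lemma L2sq_le phi r : (\int[mu]_x (phi x ^+ 2)%:E <= r%:E)%E -> L2sq mu phi <= r.
Proof. by rewrite /L2sq; case: (\int[mu]_x _)%E (integral_sqr_ge0 phi). Qed.

Lemma L2sq_ge0 phi : 0 <= L2sq mu phi.
Proof. exact/fine_ge0/integral_sqr_ge0. Qed.

Lemma inL2_0 : inL2 mu (fun _ => 0).
Proof.
split; first exact: measurable_cst.
by under eq_integral do rewrite expr0n /=; rewrite integral0 ltry.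
Qed.

Lemma L2sq0 : L2sq mu (fun _ => 0) = 0.
Proof. by rewrite /L2sq; under eq_integral do rewrite expr0n /=; rewrite integral0. Qed.

Lemma Hnorm_ge0 p : 0 <= Hnorm mu p.
Proof. exact: sqrtr_ge0. Qed.

Lemma Hnorm0 : Hnorm mu (fun _ => 0, fun _ => 0) = 0.
Proof. by rewrite /Hnorm /= L2sq0 addr0 sqrtr0. Qed.

Lemma opnorm_le A c : 0 <= c -> op_bounded mu A c -> opnorm mu A <= c.
Proof.
move=> c_ge0 A_le; apply: ge_sup.
  exists (Hnorm mu (A (fun _ => 0, fun _ => 0))), (fun _ => 0, fun _ => 0) => //.
  by split; [|split]; rewrite ?Hnorm0 //; exact: inL2_0.
move=> _ [p [p1 [p2 p_le1]] <-].
by apply: le_trans (A_le p p1 p2) _; exact: ler_piMr.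
Qed.

Lemma Hnorm_le_opnorm {A c} p : op_bounded mu A c ->
  inL2 mu p.1 -> inL2 mu p.2 -> Hnorm mu p <= 1 -> Hnorm mu (A p) <= opnorm mu A.
Proof.
move=> A_le p1 p2 p_le1; apply: ub_le_sup; last by exists p.
exists `|c| => _ [q [q1 [q2 q_le1]] <-]; apply: le_trans (A_le q q1 q2) _.
have := Hnorm_ge0 q; have := normr_ge0 c; have := ler_norm c; nra.
Qed.

Lemma opnorm_ge0 {A c} : op_bounded mu A c -> 0 <= opnorm mu A.
Proof.
move=> A_le; apply: le_trans (Hnorm_ge0 (A (fun _ => 0, fun _ => 0))) _.
by apply: (Hnorm_le_opnorm _ A_le); rewrite ?Hnorm0 //; exact: inL2_0.
Qed.

End SquareIntegrable.

Section Commutator.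
Context {R : realType} {mu : {measure set Omega -> \bar R}}.
Hypothesis hmu : is_uniform_bernoulli mu.
Context {f : cantor_space -> R}.
Hypothesis hf : continuous f.
Implicit Type p : @pairH R.

Let C := commutator Dop (piop (mult f)).
Let H := ruelle (fun y => `|koopman f y - f y| ^+ 2).
Let T := supnorm (fun x => Num.sqrt (H x)).

Let mf : measurable_fun setT (f : Omega -> R).
Proof. exact: cantor_continuous_measurableR. Qed.

Let H_ge0 x : 0 <= H x.
Proof. by apply: ruelle_ge0 => y; exact: sqr_ge0. Qed.

Let H_continuous : continuous (H : cantor_space -> R).
Proof.
apply: ruelle_continuous => y.
have g_cont : {for y, continuous (koopman f - f : cantor_space -> R)}.
  by apply: continuousB; [exact: koopman_continuous | exact: hf].
exact: continuous_comp g_cont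
  (continuous_comp (@norm_continuous _ R^o _) (@exprn_continuous R 2 _)).
Qed.

Let measurable_H : measurable_fun setT H.
Proof. exact: cantor_continuous_measurableR H_continuous. Qed.

Let sqrtH_ubound : has_ubound (range (fun x => `|Num.sqrt (H x)|)).
Proof.
have sqrtH_cont : continuous (fun x : cantor_space => Num.sqrt (H x)).
  by move=> x; exact: continuous_comp (H_continuous x) (@sqrt_continuous R _).
have [M [_ M_bound]] := compact_bounded
  (continuous_compact (continuous_subspaceT sqrtH_cont) cantor_space_compact).
by exists (M + 1) => _ [x _ <-]; apply: (M_bound (M + 1)); [lra | exists x].
Qed.

Let T_ge0 : 0 <= T.
Proof.
apply: le_trans (normr_ge0 (Num.sqrt (H point))) _.
by apply: ub_le_sup sqrtH_ubound _ _; exists point.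
Qed.

Let H_le x : H x <= T ^+ 2.
Proof.
rewrite -sqrtr_le // -[leLHS]ger0_norm ?sqrtr_ge0 //.
by apply: ub_le_sup sqrtH_ubound _ _; exists x.
Qed.

Lemma measurable_commutator_fst p :
  measurable_fun setT p.2 -> measurable_fun setT (C p).1.
Proof.
move=> m2; rewrite commutator_fst; apply: measurable_funM; last exact: measurable_koopman.
by apply: measurable_funB => //; exact: measurable_koopman.
Qed.

Lemma measurable_commutator_snd p :
  measurable_fun setT p.1 -> measurable_fun setT (C p).2.
Proof.
move=> m1; rewrite commutator_snd; apply: measurable_ruelle; apply: measurable_funM => //.
by apply: measurable_funB => //; exact: measurable_koopman.
Qed.

Lemma integral_sqr_commutator_fst p : measurable_fun setT p.2 ->
  (\int[mu]_x ((C p).1 x ^+ 2)%:E = \int[mu]_x (H x * p.2 x ^+ 2)%:E)%E.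
Proof.
move=> m2; rewrite -integral_ruelle //; last 2 first.
- by apply: measurable_funX; exact: measurable_commutator_fst.
- by move=> x; exact: sqr_ge0.
apply: eq_integral => x _; congr (_%:E).
rewrite -(ruelle_mul_koopman _ (fun z => p.2 z ^+ 2)) commutator_fst.
by congr (ruelle _ x); apply/funext => y; rewrite exprMn real_normK ?num_real.
Qed.

Lemma commutator_snd_sqr_le p x :
  (C p).2 x ^+ 2 <= H x * ruelle (fun y => p.1 y ^+ 2) x.
Proof.
have -> : H x = ruelle (fun y => (f y - koopman f y) ^+ 2) x.
  by congr (ruelle _ x); apply/funext => y; rewrite distrC real_normK ?num_real.
rewrite commutator_snd; exact: ruelle_mul_sqr_le.
Qed.

Lemma integral_sqr_commutator_fst_le p : inL2 mu p.2 ->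
  (\int[mu]_x ((C p).1 x ^+ 2)%:E <= (T ^+ 2 * L2sq mu p.2)%:E)%E.
Proof.
move=> p2; have m2 := p2.1.
rewrite integral_sqr_commutator_fst // EFinM -integral_sqrE //.
apply: integral_le_scale.
- by apply: measurable_funM => //; exact: measurable_funX.
- exact: measurable_funX.
- by move=> x; rewrite mulr_ge0 ?sqr_ge0.
- by move=> x; rewrite sqr_ge0.
- exact: sqr_ge0.
- by move=> x; rewrite ler_wpM2r ?sqr_ge0.
Qed.

Lemma inL2_commutator_fst p : inL2 mu p.2 -> inL2 mu (C p).1.
Proof.
move=> p2; split; first exact: measurable_commutator_fst p2.1.
exact: le_lt_trans (integral_sqr_commutator_fst_le _ p2) (ltry _).
Qed.

Lemma integral_sqr_commutator_snd_le p : inL2 mu p.1 ->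
  (\int[mu]_x ((C p).2 x ^+ 2)%:E <= (T ^+ 2 * L2sq mu p.1)%:E)%E.
Proof.
move=> p1; have m1 := p1.1.
have sqr1_ge0 x : 0 <= ruelle (fun y => p.1 y ^+ 2) x.
  by apply: ruelle_ge0 => y; exact: sqr_ge0.
rewrite EFinM -integral_sqrE // -(integral_ruelle hmu (fun y => p.1 y ^+ 2)); last 2 first.
- exact: measurable_funX.
- by move=> x; exact: sqr_ge0.
apply: integral_le_scale.
- by apply: measurable_funX; exact: measurable_commutator_snd.
- by apply: measurable_ruelle; exact: measurable_funX.
- by move=> x; rewrite sqr_ge0.
- exact: sqr1_ge0.
- exact: sqr_ge0.
- move=> x; apply: le_trans (commutator_snd_sqr_le p x) _.
  by rewrite ler_wpM2r.
Qed.

Lemma commutator_bounded : op_bounded mu C T.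
Proof.
move=> p p1 p2.
have fst := L2sq_le _ _ (integral_sqr_commutator_fst_le _ p2).
have snd := L2sq_le _ _ (integral_sqr_commutator_snd_le _ p1).
rewrite /Hnorm sqrtr_le ?mulr_ge0 ?sqrtr_ge0 // exprMn sqr_sqrtr; last first.
  by rewrite addr_ge0 ?L2sq_ge0.
lra.
Qed.

Let bump n w : @pairH R := (fun _ => 0, cylinder_bump n w).

Lemma L2sq_commutator_bump_ge n w c : 0 <= c ->
  (forall y, cylinder n w y -> c <= H y) -> c <= L2sq mu (C (bump n w)).1.
Proof.
move=> c_ge0 H_ge; have p2 := inL2_cylinder_bump hmu n w.
rewrite -lee_fin -integral_sqrE; last exact: inL2_commutator_fst.
rewrite integral_sqr_commutator_fst; last exact: p2.1.
rewrite -[leLHS]mule1 -(integral_sqr_cylinder_bump hmu n w).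
apply: scale_le_integral => //.
- by apply: measurable_funM => //; apply: measurable_funX; exact: p2.1.
- by apply: measurable_funX; exact: p2.1.
- by move=> y; rewrite sqr_ge0.
move=> y; rewrite sqr_cylinder_bump /indic.
have [/set_mem /H_ge cH|_] := boolP (y \in cylinder n w); last by rewrite !mulr0.
by rewrite ler_wpM2r // mulr_ge0 ?exprn_ge0.
Qed.

Lemma L2sq_commutator_bump_le n w : L2sq mu (C (bump n w)).1 <= opnorm mu C ^+ 2.
Proof.
have unit_bump : Hnorm mu (bump n w) <= 1.
  by rewrite /Hnorm /= L2sq0 add0r /L2sq integral_sqr_cylinder_bump // sqrtr1.
have snd0 : (C (bump n w)).2 = fun _ => 0.
  by rewrite commutator_snd; apply/funext => y; rewrite /ruelle /= !mulr0 addr0 mul0r.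
have := Hnorm_le_opnorm (bump n w) commutator_bounded inL2_0
  (inL2_cylinder_bump hmu n w) unit_bump.
by rewrite /Hnorm snd0 L2sq0 addr0 sqrtr_le // (opnorm_ge0 commutator_bounded).
Qed.

Lemma sqrtH_le_opnorm x : Num.sqrt (H x) <= opnorm mu C.
Proof.
rewrite sqrtr_le ?(opnorm_ge0 commutator_bounded) //.
apply/ler_addgt0Pr => e e_gt0; rewrite -lerBlDr.
have [|c_gt0] := lerP (H x - e) 0; first by move/le_trans; apply; exact: sqr_ge0.
have [n near_x] : exists n, cylinder n x `<=` [set y | H x - e < H y].
  have H_gt : H x - e < H x by lra.
  by apply: nbhs_cylinder; exact: (cvgr_gt _ (H_continuous x) _ H_gt).
apply: le_trans (L2sq_commutator_bump_le n x).
by apply: L2sq_commutator_bump_ge (ltW c_gt0) _ => y /near_x /ltW.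
Qed.

Lemma opnorm_commutator : opnorm mu C = T.
Proof.
apply/le_anti/andP; split; first exact: opnorm_le T_ge0 commutator_bounded.
apply: ge_sup; first by exists `|Num.sqrt (H point)|, point.
by move=> _ [x _ <-]; rewrite ger0_norm ?sqrtr_ge0 //; exact: sqrtH_le_opnorm.
Qed.

End Commutator.

Theorem proposition2p11 (R : realType) (mu : {measure set Omega -> \bar R})
  (hmu : is_uniform_bernoulli mu)
  (f : cantor_space -> R) (hf : continuous f) :
  opnorm mu (commutator Dop (piop (mult f))) =
    supnorm (fun x => Num.sqrt (ruelle (fun y => `|koopman f y - f y| ^+ 2) x))
  /\
  supnorm (fun x => Num.sqrt (ruelle (fun y => `|koopman f y - f y| ^+ 2) x)) =
    sup (range (fun x : Omega => Num.sqrt (`|f x - f (ocons false x)| ^+ 2 / 2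
                                          + `|f x - f (ocons true x)| ^+ 2 / 2))).
Proof.
split; first exact (opnorm_commutator hmu hf).
rewrite /supnorm; do 2 apply: congr1; apply/funext => x.
by rewrite ger0_norm ?sqrtr_ge0 // /ruelle /koopman !oshift_ocons mulrDl.
Qed.
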